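(* Let $\Lambda=\langle a_1\rangle\perp\cdots\perp\langle a_n\rangle=\mathcal{O}_Ds_1\perp\cdots\perp\mathcal{O}_Ds_n$ be a skew-hermitian lattice with $\nu(a_1)\le\cdots\le\nu(a_n)$, and assume $\mu(\Lambda)>\nu(4)$ and $N(a_2),\dots,N(a_n)\in N(a_1)k^{*2}$. Let $(s;\sigma)\in\mathcal{B}(\Lambda)$, i.e. $s=(1-r)s_m-s_0$ with $s_0=\lambda_{m+1}s_{m+1}+\cdots+\lambda_ns_n$ ($\lambda_l\in\mathcal{O}_D$), $\sigma=a_m(1-\bar r)$ and $|1-\bar r|\ge|2|$. If for some $t\in\{1,\dots,n-m\}$ we have $|\lambda_{m+t}|\ge|\lambda_{m+t+l}|$ for all $l\in\{1,\dots,n-m-t\}$, then there exists a lattice $\Lambda'=\langle b_1\rangle\perp\cdots\perp\langle b_{t+1}\rangle\subseteq\Lambda$ such that: (1) $(s;\sigma)\in\mathcal{U}^+_k(\Lambda')$; (2) $\mu(\Lambda')\ge\mu(\Lambda)$; (3) $N(b_i)\in N(a_1)k^{*2}$ for all $i=1,\dots,t+1$.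
   Context: $k$ is a dyadic local field of characteristic $0$ (finite extension of $\mathbb{Q}_2$), $\nu_k$ its normalized valuation, $|\cdot|_k$ its absolute value. $D$ is the quaternion division algebra over $k$ with canonical involution $q\mapsto\bar q$ and reduced norm $N$; $|q|:=|N(q)|_k$, $\nu(q):=\nu_k(N(q))$; $\mathcal{O}_D=\{q:|q|\le1\}$. A skew-hermitian space is a free $D$-module $V$ of finite rank with nondegenerate $h:V\times V\to D$, $D$-linear in the first variable, $h(x,y)=-\overline{h(y,x)}$. For pure quaternions $a_i$, $\langle a_1\rangle\perp\cdots\perp\langle a_n\rangle=\mathcal{O}_Ds_1\perp\cdots\perp\mathcal{O}_Ds_n$ means an orthogonal sum with $h(s_i,s_i)=a_i$; for such a lattice with $\nu(a_1)\le\cdots\le\nu(a_n)$, $\mu(\Lambda)=\min_i(\nu(a_{i+1})-\nu(a_i))$. For $s\in V$, $\sigma\in D^*$ with $\sigma-\bar\sigma=h(s,s)$, the simple rotation is $(s;\sigma)(x)=x-h(x,s)\sigma^{-1}s$; it is an isometry. $\mathcal{U}^+_k(\Lambda)$ is the group of isometries of $h$ with $\phi(\Lambda)=\Lambda$. $\mathcal{B}(\Lambda)$ is the set of simple rotations $(s;\sigma)\in\mathcal{U}^+_k(\Lambda)$ for which there exist $m\in\{1,\dots,n\}$, $r\in\mathcal{O}_D$ with $|1-r|\ge|2|$ and $\lambda_{m+1},\dots,\lambda_n\in\mathcal{O}_D$ with $s=(1-r)s_m-\sum_{l>m}\lambda_ls_l$ and $\sigma=a_m(1-\bar r)$. *)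

From mathcomp Require Import all_boot all_order all_algebra.
Set Implicit Arguments. Unset Strict Implicit. Unset Printing Implicit Defensive.
Import Order.TTheory GRing.Theory Num.Theory.
Local Open Scope ring_scope.

(* A finite extension of Q_2 = a field of characteristic 0, complete for a
   discrete (normalized, Z-valued) valuation, with finite residue field of
   characteristic 2.  The value [v 0] is irrelevant (never used). *)
Definition vge (k : fieldType) (v : k -> int) (x : k) (N : int) : Prop :=
  x = 0 \/ N <= v x.

Record dyadic_local_field (k : fieldType) (v : k -> int) : Prop := {
  dlf_char0 : [pchar k] =i pred0;
  dlf_mul : forall x y : k, x != 0 -> y != 0 -> v (x * y) = v x + v y;
  dlf_add : forall x y : k, x != 0 -> y != 0 -> x + y != 0 ->
              Num.min (v x) (v y) <= v (x + y);
  dlf_normalized : exists pi : k, pi != 0 /\ v pi = 1;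
  dlf_residue_char2 : 0 < v 2%:R;
  dlf_finite_residue : exists reps : seq k, forall x : k, vge v x 0 ->
              exists2 y, y \in reps & (vge v (x - y) 1);
  dlf_complete : forall u : nat -> k,
      (forall N : int, exists M : nat, forall i j : nat,
          (M <= i)%N -> (M <= j)%N -> vge v (u i - u j) N) ->
      exists l : k, forall N : int, exists M : nat, forall i : nat,
          (M <= i)%N -> vge v (u i - l) N
}.

Record quat (k : Type) := Quat { q0 : k; q1 : k; q2 : k; q3 : k }.

Section Quaternions.
Variables (k : fieldType) (alpha beta : k).

Definition qzero : quat k := Quat 0 0 0 0.
Definition qofk (c : k) : quat k := Quat c 0 0 0.
Definition qone : quat k := qofk 1.
Definition qadd (p q : quat k) : quat k :=
  Quat (q0 p + q0 q) (q1 p + q1 q) (q2 p + q2 q) (q3 p + q3 q).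
Definition qopp (p : quat k) : quat k := Quat (- q0 p) (- q1 p) (- q2 p) (- q3 p).
Definition qsub (p q : quat k) : quat k := qadd p (qopp q).
Definition qscal (c : k) (p : quat k) : quat k :=
  Quat (c * q0 p) (c * q1 p) (c * q2 p) (c * q3 p).
(* basis 1, i, j, ij with i^2 = alpha, j^2 = beta, ij = - ji *)
Definition qmul (a b : quat k) : quat k :=
  Quat (q0 a * q0 b + alpha * q1 a * q1 b + beta * q2 a * q2 b
          - alpha * beta * q3 a * q3 b)
       (q0 a * q1 b + q1 a * q0 b - beta * q2 a * q3 b + beta * q3 a * q2 b)
       (q0 a * q2 b + q2 a * q0 b + alpha * q1 a * q3 b - alpha * q3 a * q1 b)
       (q0 a * q3 b + q3 a * q0 b + q1 a * q2 b - q2 a * q1 b).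
Definition qconj (p : quat k) : quat k := Quat (q0 p) (- q1 p) (- q2 p) (- q3 p).
Definition qN (p : quat k) : k :=
  q0 p ^+ 2 - alpha * q1 p ^+ 2 - beta * q2 p ^+ 2 + alpha * beta * q3 p ^+ 2.
Definition qinv (p : quat k) : quat k := qscal (qN p)^-1 (qconj p).
Definition pure (p : quat k) : Prop := q0 p = 0.

Definition is_quat_division : Prop :=
  alpha != 0 /\ beta != 0 /\ forall p : quat k, qN p = 0 -> p = qzero.

Variable v : k -> int.
Definition nuD (p : quat k) : int := v (qN p).
(* |p| <= |q|, where |q| := |N(q)|_k (normalized absolute value) *)
Definition leabs (p q : quat k) : Prop :=
  qN p = 0 \/ (qN q != 0 /\ v (qN q) <= v (qN p)).
Definition inO (p : quat k) : Prop := leabs p qone.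

Variable n : nat.
Definition vec := 'I_n -> quat k.
Definition vzero : vec := fun _ => qzero.
Definition vadd (x y : vec) : vec := fun i => qadd (x i) (y i).
Definition vscale (c : quat k) (x : vec) : vec := fun i => qmul c (x i).

Variable a : 'I_n -> quat k.  (* a i = h(s_i, s_i) *)
(* h(x, y) for x = sum x_i s_i, y = sum y_i s_i *)
Definition herm (x y : vec) : quat k :=
  \big[qadd/qzero]_(i < n) qmul (qmul (x i) (a i)) (qconj (y i)).

Definition isometry (phi : vec -> vec) : Prop :=
  (forall c x y, phi (vadd (vscale c x) y) = vadd (vscale c (phi x)) (phi y))
  /\ bijective phi
  /\ (forall x y, herm (phi x) (phi y) = herm x y).

Definition simple_rot (s : vec) (sigma : quat k) : vec -> vec :=
  fun x i => qsub (x i) (qmul (qmul (herm x s) (qinv sigma)) (s i)).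

Definition inStd (x : vec) : Prop := forall i, inO (x i).
Definition inSpan (p : nat) (u : 'I_p -> vec) (x : vec) : Prop :=
  exists c : 'I_p -> quat k, (forall j, inO (c j)) /\
    x = \big[vadd/vzero]_(j < p) vscale (c j) (u j).

Definition stabilizes (phi : vec -> vec) (L : vec -> Prop) : Prop :=
  (forall x, L x -> L (phi x)) /\ (forall y, L y -> exists x, L x /\ phi x = y).
Definition inU (phi : vec -> vec) (L : vec -> Prop) : Prop :=
  isometry phi /\ stabilizes phi L.

Definition svec (m : 'I_n) (r : quat k) (lam : 'I_n -> quat k) : vec :=
  fun i => if i == m then qsub qone r
           else if (m < i)%N then qopp (lam i) else qzero.
Definition sigmaB (m : 'I_n) (r : quat k) : quat k :=
  qmul (a m) (qsub qone (qconj r)).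

End Quaternions.

Definition in_sqclass (k : fieldType) (c d : k) : Prop :=
  exists e : k, e != 0 /\ c = d * e ^+ 2.

(* mu of a lattice <b_1> _|_ ... _|_ <b_p>: min over consecutive gaps of the
   valuations after sorting them increasingly (only used for p >= 2). *)
Definition gapmin (s : seq int) : int :=
  match s with
  | x :: s' => match pairmap (fun p q => q - p) x s' with
               | [::] => 0
               | g :: gs => foldr Num.min g gs
               end
  | [::] => 0
  end.
Definition mu (s : seq int) : int := gapmin (sort (fun x y : int => x <= y) s).
Arguments qzero {k}.
Arguments qone {k}.

(* Let Lambda' have basis s_m, ..., s_(m+t-1) and
   s_(m+t) + sum_(l > m+t) lam_(m+t)^-1 lam_l s_l.  As |lam_(m+t)| >= |lam_l| the
   coefficients are integral, and Lambda' is exactly Lambda meet W, W the D-span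
   of the basis.  The vector s lies in W, so (s; sigma) preserves W and, by
   hypothesis, Lambda, hence Lambda'.  The basis is orthogonal with Gram entries
   a_m, ..., a_(m+t-1) and a_(m+t) + e, where mu(Lambda) > nu(4) forces
   nu(e) > nu(a_(m+t)) + nu(4).  Then N(a_(m+t) + e) = N(a_(m+t)) (1 + z) with
   v(z) > 2 v(2), and 1 + z is a square by Hensel's lemma.  So the new Gram
   entries have the valuations nu(a_m), ..., nu(a_(m+t)), which gives
   mu(Lambda') >= mu(Lambda), and norms in N(a_1) k*^2. *)

From HB Require Import structures.
From mathcomp Require Import all_boot all_order all_algebra.
From mathcomp Require Import ring zify.
From Stdlib Require Import FunctionalExtensionality.
Set Implicit Arguments. Unset Strict Implicit. Unset Printing Implicit Defensive.
Import Order.TTheory GRing.Theory Num.Theory.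
Local Open Scope ring_scope.

Section Valuation.
Variables (k : fieldType) (v : k -> int).
Hypothesis hk : dyadic_local_field v.

Lemma vM (x y : k) : x != 0 -> y != 0 -> v (x * y) = v x + v y.
Proof. exact: dlf_mul. Qed.

Lemma v1 : v 1 = 0.
Proof. have : v 1 = v 1 + v 1 by rewrite -vM ?oner_neq0 ?mulr1. lia. Qed.

Lemma vV (x : k) : x != 0 -> v x^-1 = - v x.
Proof.
move=> x0; have : v 1 = v x + v x^-1 by rewrite -vM ?invr_neq0 ?mulfV.
rewrite v1; lia.
Qed.

Lemma vN (x : k) : v (- x) = v x.
Proof.
have [->|x0] := eqVneq x 0; first by rewrite oppr0.
have N10 : (-1 : k) != 0 by rewrite oppr_eq0 oner_neq0.
have : v 1 = v (-1) + v (-1) by rewrite -vM // mulrNN mulr1.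
by rewrite v1 -[- x]mulN1r vM //; lia.
Qed.

Lemma vge_v x : vge v x (v x). Proof. by right. Qed.

Lemma vge1 : vge v 1 0. Proof. by right; rewrite v1. Qed.

Lemma vgeW x N M : vge v x N -> M <= N -> vge v x M.
Proof. by case=> [->|h] hMN; [left | right; apply: le_trans h]. Qed.

Lemma vgeD x y N : vge v x N -> vge v y N -> vge v (x + y) N.
Proof.
have [->|x0] := eqVneq x 0; first by rewrite add0r.
have [->|y0] := eqVneq y 0; first by rewrite addr0.
have [->|xy0] := eqVneq (x + y) 0; first by left.
case=> [/eqP|hx]; first by rewrite (negbTE x0).
case=> [/eqP|hy]; first by rewrite (negbTE y0).
by right; apply: le_trans (dlf_add hk x0 y0 xy0); rewrite le_min hx hy.
Qed.

Lemma vgeN x N : vge v x N -> vge v (- x) N.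
Proof. by case=> [->|h]; [rewrite oppr0; left | right; rewrite vN]. Qed.

Lemma vgeB x y N : vge v x N -> vge v y N -> vge v (x - y) N.
Proof. by move=> hx /vgeN; apply: vgeD. Qed.

Lemma vgeM x y N M : vge v x N -> vge v y M -> vge v (x * y) (N + M).
Proof.
case=> [->|hx]; first by rewrite mul0r; left.
case=> [->|hy]; first by rewrite mulr0; left.
have [->|x0] := eqVneq x 0; first by rewrite mul0r; left.
have [->|y0] := eqVneq y 0; first by rewrite mulr0; left.
by right; rewrite vM // lerD.
Qed.

Lemma vgeV x : vge v x^-1 (- v x).
Proof.
have [->|x0] := eqVneq x 0; first by rewrite invr0; left.
by right; rewrite vV.
Qed.

Lemma vge_eq0 x : (forall N, vge v x N) -> x = 0.
Proof. by move=> h; case: (h (v x + 1)) => // /=; lia. Qed.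

Lemma unit1D z : vge v z 1 -> 1 + z != 0 /\ v (1 + z) = 0.
Proof.
move=> hz.
have not_vge1 : ~ vge v (1 + z) 1.
  move=> /vgeB /(_ hz); rewrite addrK; case=> [/eqP|]; first by rewrite oner_eq0.
  by rewrite v1.
have uz0 : 1 + z != 0 by apply: contra_notN not_vge1 => /eqP ->; left.
have hv0 : 0 <= v (1 + z).
  by case: (vgeD vge1 (vgeW hz ler01)) => [/eqP|//]; rewrite (negbTE uz0).
have : ~ 1 <= v (1 + z) by move=> h; apply: not_vge1; right.
split=> //; lia.
Qed.

Lemma two_neq0 : (2%:R : k) != 0.
Proof. by have /pcharf0P -> := dlf_char0 hk. Qed.

Lemma v2_gt0 : 0 < v 2%:R. Proof. exact: dlf_residue_char2. Qed.

End Valuation.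

(* The fixed points of [u |-> 1 - c / u] are the roots of [u^2 - u + c]; for
   [v c >= 1] the iterates from [1] are units and consecutive differences gain
   valuation [v c] at each step. *)
Fixpoint hensel_seq (k : fieldType) (c : k) (n : nat) : k :=
  if n is n'.+1 then 1 - c / hensel_seq c n' else 1.

Section Hensel.
Variables (k : fieldType) (v : k -> int).
Hypothesis hk : dyadic_local_field v.
Variable c : k.
Hypothesis hc : vge v c 1.
Local Notation hs := (hensel_seq c).

Lemma hensel_seq_near1 n : vge v (hs n - 1) 1.
Proof.
elim: n => [|n IH] /=; first by rewrite subrr; left.
have [hs0 hsv] := unit1D hk IH; rewrite addrC subrK in hs0 hsv.
rewrite addrC addKr; apply: (vgeN hk).
by have := vgeM hk hc (vgeV hk (hs n)); rewrite hsv oppr0 addr0.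
Qed.

Lemma hensel_seq_unit n : hs n != 0 /\ v (hs n) = 0.
Proof. by have := unit1D hk (hensel_seq_near1 n); rewrite addrC subrK. Qed.

Lemma hensel_seq_step n : vge v (hs n.+1 - hs n) n.+1.
Proof.
elim: n => [|n IH]; first by rewrite /= divr1 addrAC subrr add0r; apply: (vgeN hk).
have [h0 v0] := hensel_seq_unit n; have [h1 v1] := hensel_seq_unit n.+1.
have -> : hs n.+2 - hs n.+1 = c * (hs n.+1 - hs n) * (hs n * hs n.+1)^-1.
  have -> : hs n.+2 - hs n.+1 = (1 - c / hs n.+1) - (1 - c / hs n) by [].
  move: h0 h1; set x := hs n; set y := hs n.+1 => h0 h1.
  by field; rewrite h0 h1.
apply: vgeW (vgeM hk (vgeM hk hc IH) (vgeV hk _)) _.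
by rewrite vM ?mulf_neq0 // v0 v1; lia.
Qed.

Lemma hensel_seq_cauchy i p : vge v (hs (i + p) - hs i) i.+1.
Proof.
elim: p => [|p IH]; first by rewrite addn0 subrr; left.
rewrite -(subrK (hs (i + p)) (hs (i + p.+1))) -addrA addnS.
by apply: (vgeD hk) => //; apply: vgeW (hensel_seq_step _) _; lia.
Qed.

Lemma hensel_root : exists u, u * u - u + c = 0.
Proof.
have cauchy N : exists M : nat, forall i j, (M <= i)%N -> (M <= j)%N ->
    vge v (hs i - hs j) N.
  exists `|N|%N => i j hi hj; have [hij|/ltnW hji] := leqP i j.
    by rewrite -(subnKC hij) -opprB; apply/(vgeN hk)/(vgeW (hensel_seq_cauchy _ _)); lia.
  by rewrite -(subnKC hji); apply: vgeW (hensel_seq_cauchy _ _) _; lia.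
have [l hl] := dlf_complete hk cauchy.
exists l; apply: vge_eq0 => T.
have [M hM] := hl `|T|%:Z; set i := (M + `|T|)%N.
have hi := hM i (leq_addr _ _).
have ec : c = hs i * (1 - hs i.+1).
  by rewrite /= opprB addrC subrK mulrC divfK ?(hensel_seq_unit i).1.
have expand (x y w e : k) : e = x * (1 - y) ->
    w * w - w + e = - (x * (y - x)) - (x - w) * ((x - 1) + x - (x - w)).
  by move->; ring.
rewrite (expand _ _ _ _ ec).
apply: (vgeB hk).
  apply/(vgeN hk)/(vgeW (vgeM hk (vgeW (vge_v v _) _) (hensel_seq_step i))).
    by rewrite (hensel_seq_unit i).2.
  by lia.
have bounded : vge v ((hs i - 1) + hs i - (hs i - l)) 0.
  apply: (vgeB hk); last by apply: vgeW hi _; lia.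
  apply: (vgeD hk); first exact: vgeW (hensel_seq_near1 i) _.
  by right; rewrite (hensel_seq_unit i).2.
by apply: vgeW (vgeM hk hi bounded) _; lia.
Qed.

End Hensel.

Lemma principal_unit_square (k : fieldType) (v : k -> int)
    (hk : dyadic_local_field v) (z : k) :
  vge v z (2 * v 2%:R + 1) -> exists2 x, x != 0 & 1 + z = x * x.
Proof.
move=> hz.
have two0 := two_neq0 hk.
have four_neq0 : (4%:R : k) != 0 by rewrite (natrM k 2 2) mulf_neq0.
have hc : vge v (- (z / 4%:R)) 1.
  apply/(vgeN hk)/(vgeW (vgeM hk hz (vgeV hk 4%:R))).
  by rewrite (natrM k 2 2) (vM hk) //; lia.
have [u hu] := hensel_root hk hc.
have square : 1 + z = (1 - 2%:R * u) * (1 - 2%:R * u).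
  rewrite -[z](divfK four_neq0) (natrM k 2 2).
  have -> : z / (2%:R * 2%:R) = u * u - u by rewrite -(natrM k 2 2) -[LHS]add0r -hu; ring.
  by ring.
have hz1 : vge v z 1 by apply: vgeW hz _; have := v2_gt0 hk; lia.
exists (1 - 2%:R * u) => //.
by apply: contraNneq (unit1D hk hz1).1 => x0; rewrite square x0 mul0r.
Qed.

Lemma foldr_min_le (g : int) gs y : y \in g :: gs -> foldr Num.min g gs <= y.
Proof.
elim: gs g => [|h gs IH] g /=; first by rewrite inE => /eqP ->.
rewrite !inE ge_min => /or3P[/eqP e|/eqP->|hy].
- by rewrite (IH g) ?orbT // e mem_head.
- by rewrite lexx.
- by rewrite (IH g) ?inE ?hy ?orbT.
Qed.

Lemma foldr_min_ge (g : int) gs c :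
  (forall y, y \in g :: gs -> c <= y) -> c <= foldr Num.min g gs.
Proof.
elim: gs g => [|h gs IH] g /= hc; first by rewrite hc ?mem_head.
rewrite le_min hc ?inE ?eqxx ?orbT //= IH // => y.
by rewrite inE => /orP[/eqP->|hy]; apply: hc; rewrite !inE ?eqxx ?hy ?orbT.
Qed.

Section Gaps.
Variables (F : nat -> int) (len : nat).
Hypothesis F_mono : {in gtn len &, {homo F : p q / (p <= q)%N >-> p <= q}}.

Lemma pairmap_map_iota i l :
  pairmap (fun p q => q - p) (F i) (map F (iota i.+1 l))
  = map (fun j => F j.+1 - F j) (iota i l).
Proof. by elim: l i => [|l IH] i //=; rewrite IH. Qed.

Lemma mu_map_iota :
  mu (map F (iota 0 len)) = gapmin (map F (iota 0 len)).
Proof.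
rewrite /mu sorted_sort; [by []|by move=> ? ? ?; apply: le_trans|].
apply/(sortedP 0) => j; rewrite size_map size_iota => hj.
have hj' : (j < len)%N := ltnW hj.
rewrite !(nth_map 0%N) ?size_iota // !nth_iota // !add0n.
by apply: F_mono; rewrite ?inE.
Qed.

Lemma mu_map_iota_le j :
  (j.+1 < len)%N -> mu (map F (iota 0 len)) <= F j.+1 - F j.
Proof.
move=> hj; rewrite mu_map_iota; case: len hj => // l hj /=.
rewrite pairmap_map_iota; case: l hj => // l hj /=; apply: foldr_min_le.
rewrite -[X in _ \in X]/(map (fun j => F j.+1 - F j) (iota 0 l.+1)).
by apply/mapP; exists j; rewrite ?mem_iota.
Qed.

Lemma mu_map_iota_ge c : (1 < len)%N ->
  (forall j, (j.+1 < len)%N -> c <= F j.+1 - F j) ->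
  c <= mu (map F (iota 0 len)).
Proof.
move=> hlen hc; rewrite mu_map_iota; case: len hlen hc => // l hlen hc /=.
rewrite pairmap_map_iota; case: l hlen hc => // l _ hc /=.
apply: foldr_min_ge => y.
rewrite -[X in _ \in X]/(map (fun j => F j.+1 - F j) (iota 0 l.+1)).
by move=> /mapP[j]; rewrite mem_iota => /= hj ->; apply: hc.
Qed.

End Gaps.

Section QuaternionAlgebra.
Variables (k : fieldType) (al be : k).
Implicit Types (p q w : quat k) (c : k).
Local Notation qm := (qmul al be).
Local Notation N := (qN al be).

Ltac quat_ring := repeat match goal with p : quat _ |- _ => destruct p end;
  rewrite /qinv /qsub /qmul /qadd /qopp /qconj /qscal /qone /qofk /qzero /qN /=;
  try (congr Quat; ring); try ring.

Lemma qaddA : associative (@qadd k). Proof. move=> *; quat_ring. Qed.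
Lemma qaddC : commutative (@qadd k). Proof. move=> *; quat_ring. Qed.
Lemma qadd0 : left_id qzero (@qadd k). Proof. move=> p; quat_ring. Qed.
Lemma qaddr0 p : qadd p qzero = p. Proof. quat_ring. Qed.
Lemma qsubK p q : qadd (qsub p q) q = p. Proof. quat_ring. Qed.
Lemma qopp0 : qopp (@qzero k) = qzero. Proof. quat_ring. Qed.
Lemma qconj0 : qconj (@qzero k) = qzero. Proof. quat_ring. Qed.
Lemma qconj1 : qconj (@qone k) = qone. Proof. quat_ring. Qed.

Lemma qmulA p q w : qm p (qm q w) = qm (qm p q) w. Proof. quat_ring. Qed.
Lemma qmulDl p q w : qm (qadd p q) w = qadd (qm p w) (qm q w). Proof. quat_ring. Qed.
Lemma qmul0r p : qm qzero p = qzero. Proof. quat_ring. Qed.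
Lemma qmulr0 p : qm p qzero = qzero. Proof. quat_ring. Qed.
Lemma qmul1r p : qm qone p = p. Proof. quat_ring. Qed.
Lemma qmulr1 p : qm p qone = p. Proof. quat_ring. Qed.
Lemma qmulNr p q : qm (qopp p) q = qopp (qm p q). Proof. quat_ring. Qed.

Lemma qN0 : N qzero = 0. Proof. quat_ring. Qed.
Lemma qN1 : N qone = 1. Proof. quat_ring. Qed.
Lemma qN_ofk c : N (qofk c) = c * c. Proof. quat_ring. Qed.
Lemma qNM p q : N (qm p q) = N p * N q. Proof. quat_ring. Qed.
Lemma qN_conj p : N (qconj p) = N p. Proof. quat_ring. Qed.
Lemma qN_add p q : N (qadd p q) = N p + N q + 2%:R * q0 (qm p (qconj q)).
Proof. quat_ring. Qed.
Lemma qN_subofk p c : N (qsub p (qofk c)) = c * c - 2%:R * q0 p * c + N p.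
Proof. quat_ring. Qed.

Lemma qN_scal c p : N (qscal c p) = c * c * N p. Proof. quat_ring. Qed.

Lemma qN_inv p : N (qinv al be p) = (N p)^-1.
Proof.
rewrite /qinv qN_scal qN_conj.
by have [->|Np0] := eqVneq (N p) 0; [rewrite invr0 !mul0r | field].
Qed.

Lemma qmulV p : N p != 0 -> qm p (qinv al be p) = qone.
Proof.
have -> : qm p (qinv al be p) = qofk (N p * (N p)^-1) by quat_ring.
by move=> Np0; rewrite mulfV.
Qed.

End QuaternionAlgebra.

HB.instance Definition _ (k : fieldType) :=
  Monoid.isComLaw.Build (quat k) qzero (@qadd k) (@qaddA k) (@qaddC k) (@qadd0 k).

Section QuaternionValuation.
Variables (k : fieldType) (v : k -> int) (al be : k).
Hypothesis hk : dyadic_local_field v.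
Hypothesis hD : is_quat_division al be.
Local Notation N := (qN al be).
Local Notation qm := (qmul al be).

Lemma qN_eq0 p : N p = 0 -> p = qzero. Proof. exact: hD.2.2. Qed.

Lemma qN_neq0 p : p <> qzero -> N p != 0. Proof. by move=> p0; apply/eqP => /qN_eq0. Qed.

Lemma inOE p : inO al be v p <-> vge v (N p) 0.
Proof.
rewrite /inO /leabs qN1 (v1 hk).
by split=> [[->|[]]|[->|]]; [left | right | left | right; rewrite ?oner_neq0].
Qed.

(* If [v (2 q0 g) < d], Hensel gives a root [x] in [k] of the reduced
   characteristic polynomial [X^2 - 2 q0 g X + N g] of [g]; as [D] is a division
   algebra [g = x], and then [2 q0 g = 2 x], [N g = x^2] contradict the bounds. *)
Lemma vge_trace g (d : int) : vge v (N g) (2 * d - 1) -> vge v (2%:R * q0 g) d.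
Proof.
move=> hN; set T := 2%:R * q0 g.
have [->|T0] := eqVneq T 0; first by left.
have [//|hvT] := lerP d (v T); first by right.
have hc : vge v (N g / (T * T)) 1.
  by apply: vgeW (vgeM hk hN (vgeV hk _)) _; rewrite (vM hk) //; lia.
have [u hu] := hensel_root hk hc.
have hx : (T * u) * (T * u) - T * (T * u) + N g = 0.
  by rewrite -[RHS](mulr0 (T * T)) -hu; field.
set x := T * u in hx *.
have /qN_eq0 eg : N (qsub g (qofk x)) = 0 by rewrite qN_subofk -hx /T; ring.
have [e0 e1 e2 e3] : [/\ q0 g = x, q1 g = 0, q2 g = 0 & q3 g = 0].
  move: (congr1 (@q0 k) eg) (congr1 (@q1 k) eg) (congr1 (@q2 k) eg) (congr1 (@q3 k) eg).
  by rewrite /= !oppr0 !addr0 => /eqP; rewrite subr_eq0 => /eqP.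
have eN : N g = x * x by rewrite /qN e0 e1 e2 e3; ring.
have eT : T = 2%:R * x by rewrite /T e0.
have x0 : x != 0 by apply: contraNneq T0 => x0; rewrite eT x0 mulr0.
move: hN hvT (v2_gt0 hk); rewrite eN eT (vM hk (two_neq0 hk) x0).
by case=> [/eqP|]; [rewrite mulf_eq0 (negbTE x0) | rewrite (vM hk x0 x0); lia].
Qed.

Lemma vge_qN_add p q d : vge v (N p) d -> vge v (N q) d -> vge v (N (qadd p q)) d.
Proof.
move=> hp hq; rewrite qN_add; apply: (vgeD hk); first exact: vgeD.
by apply: vge_trace; rewrite qNM qN_conj; apply: vgeW (vgeM hk hp hq) _; lia.
Qed.

Lemma vge_qN_sum (I : Type) (r : seq I) (P : pred I) (F : I -> quat k) d :
  (forall i, P i -> vge v (N (F i)) d) ->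
  vge v (N (\big[@qadd k/qzero]_(i <- r | P i) F i)) d.
Proof.
move=> hF; apply: (big_ind (fun q => vge v (N q) d)) => //.
  by rewrite qN0; left.
by move=> x y; apply: vge_qN_add.
Qed.

Lemma qN_add_small g e : N g != 0 ->
  vge v (N e) (v (N g) + 4%:Z * v 2%:R + 1) ->
  exists x, [/\ x != 0, v (x * x) = 0 & N (qadd g e) = N g * (x * x)].
Proof.
move=> Ng0 he; have v2 := v2_gt0 hk.
have htr : vge v (2%:R * q0 (qm g (qconj e))) (v (N g) + 2%:Z * v 2%:R + 1).
  by apply: vge_trace; rewrite qNM qN_conj; apply: vgeW (vgeM hk (vge_v v _) he) _; lia.
have hz : vge v ((N e + 2%:R * q0 (qm g (qconj e))) / N g) (2%:Z * v 2%:R + 1).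
  apply: vgeW (vgeM hk (vgeD hk (vgeW he _) htr) (vgeV hk _)) _; lia.
have [x x0 hx] := principal_unit_square hk hz.
exists x; split => //; last by rewrite qN_add -hx; field.
by rewrite -hx; apply: (unit1D hk (vgeW hz _)).2; lia.
Qed.

Lemma nuD4 : nuD al be v (qofk 4%:R) = 4%:Z * v 2%:R.
Proof.
have two0 := two_neq0 hk.
rewrite /nuD qN_ofk (natrM k 2 2) !(vM hk) ?mulf_neq0 //; lia.
Qed.

End QuaternionValuation.

Lemma vsum_coord (k : fieldType) (n p : nat) (F : 'I_p -> vec k n) (i : 'I_n) :
  (\big[@vadd k n/@vzero k n]_(j < p) F j) i = \big[@qadd k/qzero]_(j < p) F j i.
Proof. by apply: (big_ind2 (fun (x : vec k n) y => x i = y)) => // ? ? ? ? <- <-. Qed.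

Lemma simple_rotE (k : fieldType) (alpha beta : k) (n : nat) (a : 'I_n -> quat k)
    (s : vec k n) (sigma : quat k) (x : vec k n) :
  simple_rot alpha beta a s sigma x = fun i =>
    qadd (x i) (qmul alpha beta (qopp (qmul alpha beta (herm alpha beta a x s)
                                        (qinv alpha beta sigma))) (s i)).
Proof. by apply: functional_extensionality => i; rewrite qmulNr. Qed.

Section SubLattice.
Variables (k : fieldType) (v : k -> int) (alpha beta : k).
Hypothesis hk : dyadic_local_field v.
Hypothesis hD : is_quat_division alpha beta.
Variables (n : nat) (a : 'I_n -> quat k) (m : 'I_n) (lam : 'I_n -> quat k) (t : nat).
Hypothesis ht2 : (m + t < n)%N.

Local Notation N := (qN alpha beta).
Local Notation qm := (qmul alpha beta).

Let mt : 'I_n := insubd m (m + t)%N.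

Lemma val_insubd_lt (j : nat) : (j <= m + t)%N -> val (insubd m j : 'I_n) = j.
Proof. by move=> hj; rewrite val_insubd (leq_ltn_trans hj ht2). Qed.

Let val_mt : val mt = (m + t)%N. Proof. exact: val_insubd_lt. Qed.

(* When [lam mt = 0] the junk value [qinv 0 = 0] makes every [tail_coef]
   vanish; [hmax] then forces the whole tail of [lam] to vanish as well. *)
Definition tail_coef (i : 'I_n) : quat k := qm (qinv alpha beta (lam mt)) (lam i).

Definition sub_basis (j : 'I_t.+1) : vec k n := fun i =>
  if val i == (m + j)%N then qone
  else if (val j == t) && (m + t < i)%N then tail_coef i else qzero.

(* The left D-span of [sub_basis]. *)
Definition in_tail_span (y : vec k n) : Prop :=
  (forall i : 'I_n, (i < m)%N -> y i = qzero) /\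
  (forall i : 'I_n, (m + t < i)%N -> y i = qm (y mt) (tail_coef i)).

Lemma sub_basis_comb (c : 'I_t.+1 -> quat k) (i : 'I_n) :
  (\big[@vadd k n/@vzero k n]_(j < t.+1) vscale alpha beta (c j) (sub_basis j)) i =
  if (i < m)%N then qzero
  else if (i <= m + t)%N then c (inord (i - m))
  else qm (c ord_max) (tail_coef i).
Proof.
rewrite vsum_coord /vscale /sub_basis.
case: (ltnP i m) => [ltim|leim].
  rewrite big1 // => j _; rewrite ifN ?ifN ?qmulr0 //.
    by rewrite negb_and ltnNge (leq_trans (ltnW ltim)) ?leq_addr ?orbT.
  by rewrite neq_ltn (leq_trans ltim) ?leq_addr.
case: (leqP i (m + t)) => [leimt|ltmti].
  have i_m_t : (i - m < t.+1)%N by rewrite ltnS leq_subLR.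
  rewrite (bigD1 (inord (i - m))) //= inordK // subnKC // eqxx qmulr1.
  rewrite big1 ?qaddr0 // => j hj; rewrite ifN ?ifN ?qmulr0 //.
    by rewrite andbF.
  by apply: contra hj => /eqP ->; apply/eqP/val_inj; rewrite /= addKn inordK.
rewrite (bigD1 ord_max) //= ifN; last by rewrite neq_ltn ltmti orbT.
rewrite eqxx big1 ?qaddr0 // => j hj; rewrite ifN ?ifN ?qmulr0 //.
  by rewrite andbT; apply: contra hj => /eqP hjt; apply/eqP/val_inj.
by rewrite neq_ltn (leq_ltn_trans _ ltmti) ?orbT // leq_add2l -ltnS.
Qed.

Hypothesis hmax : forall i j : 'I_n, val i = (m + t)%N -> (m + t < j)%N ->
  leabs alpha beta v (lam j) (lam i).

Lemma tail_coef_int (i : 'I_n) : (m + t < i)%N -> vge v (N (tail_coef i)) 0.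
Proof.
move=> hi; rewrite /tail_coef qNM qN_inv.
case: (hmax val_mt hi) => [->|[Nmt0 le_mt_i]]; first by rewrite mulr0; left.
have [->|Ni0] := eqVneq (N (lam i)) 0; first by rewrite mulr0; left.
by right; rewrite (vM hk) ?invr_neq0 // (vV hk) //; lia.
Qed.

Lemma inSpan_sub_basis y :
  inSpan alpha beta v sub_basis y <-> inStd alpha beta v y /\ in_tail_span y.
Proof.
have intE := inOE alpha beta hk.
split=> [[c [hc ->]]|[hy [y_lo y_hi]]].
  split; [move=> i | split=> i hi; rewrite !sub_basis_comb].
  - rewrite sub_basis_comb; case: ifP => _; first by apply/intE; rewrite qN0; left.
    case: ifPn => [_|]; first exact: hc.
    rewrite -ltnNge => hi; apply/intE; rewrite qNM.
    by have := vgeM hk (proj1 (intE _) (hc ord_max)) (tail_coef_int hi); rewrite addr0.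
  - by rewrite hi.
  have -> : (i < m)%N = false by rewrite ltnNge (leq_trans (leq_addr t m) (ltnW hi)).
  rewrite leqNgt hi val_mt ltnNge leq_addr leqnn addKn /=.
  by rewrite (_ : inord t = ord_max) //; apply: val_inj; rewrite /= inordK.
exists (fun j : 'I_t.+1 => y (insubd m (m + j)%N)); split=> [j|].
  exact: hy.
apply: functional_extensionality => i; rewrite sub_basis_comb.
case: (ltnP i m) => [|leim]; first exact: y_lo.
case: (leqP i (m + t)) => [leimt|ltmti]; last by rewrite y_hi.
have i_m_t : (i - m < t.+1)%N by rewrite ltnS leq_subLR.
congr y; apply: val_inj.
by rewrite val_insubd_lt inordK ?subnKC // leq_add2l -ltnS.
Qed.

Lemma in_tail_span_addMr x y d : in_tail_span x -> in_tail_span y ->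
  in_tail_span (fun i => qadd (x i) (qm d (y i))).
Proof.
move=> [x_lo x_hi] [y_lo y_hi]; split=> i hi; first by rewrite x_lo ?y_lo ?qmulr0 ?qaddr0.
by rewrite (x_hi i hi) (y_hi i hi) [qm d _]qmulA -qmulDl.
Qed.

Lemma simple_rot_stabilizes_sub_lattice s sigma : in_tail_span s ->
  stabilizes (simple_rot alpha beta a s sigma) (inStd alpha beta v (n:=n)) ->
  stabilizes (simple_rot alpha beta a s sigma) (inSpan alpha beta v sub_basis).
Proof.
move=> hs [rot_in rot_onto]; split=> [x /inSpan_sub_basis[hx hxW]|y /inSpan_sub_basis[hy hyW]].
  by apply/inSpan_sub_basis; split; [exact: rot_in | rewrite simple_rotE; exact: in_tail_span_addMr].
have [x [hx rotx]] := rot_onto y hy; exists x; split=> //; apply/inSpan_sub_basis; split=> //.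
have -> : x = fun i => qadd (y i) (qm (qm (herm alpha beta a x s) (qinv alpha beta sigma)) (s i)).
  by apply: functional_extensionality => i; rewrite -rotx qsubK.
exact: in_tail_span_addMr.
Qed.

Lemma herm_sub_basis_orth i j : i != j ->
  herm alpha beta a (sub_basis i) (sub_basis j) = qzero.
Proof.
move=> ij; rewrite /herm big1 // => l _.
suff [->|->] : sub_basis i l = qzero \/ sub_basis j l = qzero.
- by rewrite !qmul0r.
- by rewrite qconj0 qmulr0.
have ij' : val i != val j by [].
rewrite /sub_basis; case: eqP => [li|_].
  right; rewrite !ifN ?li ?eqn_add2l // ltn_add2l ltnNge -ltnS ltn_ord andbF //.
case: andP => [[/eqP it mt_lt_l]|_]; [right | by left].
rewrite !ifN //; first by rewrite negb_and; apply/orP; left; apply: contra ij' => /eqP ->; rewrite it.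
by rewrite neq_ltn (leq_ltn_trans _ mt_lt_l) ?orbT // leq_add2l -ltnS.
Qed.

Lemma herm_sub_basis_lt (j : 'I_t.+1) : (j < t)%N ->
  herm alpha beta a (sub_basis j) (sub_basis j) = a (insubd m (m + j)%N).
Proof.
move=> jt; have mj : val (insubd m (m + j)%N : 'I_n) = (m + j)%N.
  by rewrite val_insubd_lt // leq_add2l ltnW.
rewrite /herm (bigD1 (insubd m (m + j)%N)) //= /sub_basis mj eqxx qmul1r qconj1 qmulr1.
rewrite big1 ?qaddr0 // => l hl; rewrite ifN ?(ltn_eqF jt) ?qmul0r //.
by apply: contra hl => /eqP lj; apply/eqP/val_inj; rewrite mj.
Qed.

Definition tail_gram : quat k := \big[@qadd k/qzero]_(i < n | (m + t < i)%N)
  qm (qm (tail_coef i) (a i)) (qconj (tail_coef i)).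

Lemma herm_sub_basis_max :
  herm alpha beta a (sub_basis ord_max) (sub_basis ord_max) = qadd (a mt) tail_gram.
Proof.
rewrite /herm (bigD1 mt) //= {1 2}/sub_basis val_mt eqxx qmul1r qconj1 qmulr1.
congr qadd; rewrite /tail_gram big_mkcond [in RHS]big_mkcond; apply: eq_bigr => l _ /=.
case: eqVneq => [->|lmt] /=; first by rewrite val_mt ltnn.
rewrite /sub_basis ifN ?eqxx /=; last by rewrite -val_mt val_eqE.
by case: ifP; rewrite ?qmul0r.
Qed.

Hypothesis ha_nz : forall i, a i <> qzero.
Hypothesis ha_sorted : forall i j : 'I_n, (i <= j)%N ->
  nuD alpha beta v (a i) <= nuD alpha beta v (a j).
Hypothesis hmu : nuD alpha beta v (qofk 4%:R) <
  mu [seq nuD alpha beta v (a i) | i <- enum 'I_n].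

Local Notation nu := (nuD alpha beta v).
Local Notation gram j := (herm alpha beta a (sub_basis j) (sub_basis j)).
Let nu_a (j : nat) : int := nu (a (insubd m j)).

Lemma nu_a_mono : {in gtn n &, {homo nu_a : p q / (p <= q)%N >-> p <= q}}.
Proof. by move=> p q; rewrite !inE => hp hq hpq; apply: ha_sorted; rewrite !val_insubd hp hq. Qed.

Lemma map_nu_a : [seq nu (a i) | i <- enum 'I_n] = map nu_a (iota 0 n).
Proof. by rewrite -val_enum_ord -map_comp; apply: eq_map => i /=; rewrite /nu_a valKd. Qed.

Lemma nu_tail_gt (i : 'I_n) : (m + t < i)%N -> nu (a mt) + 4%:Z * v 2%:R + 1 <= nu (a i).
Proof.
move=> hi; have := mu_map_iota_le nu_a_mono (leq_ltn_trans hi (ltn_ord i)).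
have : nu_a (m + t).+1 <= nu_a i by apply: nu_a_mono; rewrite ?inE ?(leq_ltn_trans hi).
move: hmu; rewrite map_nu_a (nuD4 alpha beta hk) /nu_a valKd /mt; lia.
Qed.

Lemma vge_qN_tail_gram : vge v (N tail_gram) (nu (a mt) + 4%:Z * v 2%:R + 1).
Proof.
apply: (vge_qN_sum hk hD) => i hi; rewrite [N (qm _ (qconj _))]qNM qN_conj [N (qm _ (a i))]qNM.
apply: vgeW (vgeM hk (vgeM hk (tail_coef_int hi) (vge_v v _)) (tail_coef_int hi)) _.
by have := nu_tail_gt hi; rewrite /nuD; lia.
Qed.

Lemma qN_sub_gram j : exists x, [/\ x != 0, v (x * x) = 0 &
  N (gram j) = N (a (insubd m (m + j)%N)) * (x * x)].
Proof.
have [jt|tj] := ltnP j t.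
  by exists 1; rewrite herm_sub_basis_lt // !mulr1 (v1 hk) oner_neq0.
have -> : j = ord_max by apply/val_inj/eqP; rewrite eqn_leq tj -ltnS ltn_ord.
rewrite herm_sub_basis_max; apply: (qN_add_small hk hD); first exact: (qN_neq0 hD).
exact: vge_qN_tail_gram.
Qed.

Lemma gram_neq0 j : gram j <> qzero.
Proof.
have [x [x0 _ hN]] := qN_sub_gram j; move/(congr1 N)/eqP; apply/negP.
by rewrite hN qN0 mulf_neq0 ?mulf_neq0 ?(qN_neq0 hD).
Qed.

Lemma nu_gram j : nu (gram j) = nu_a (m + j).
Proof.
have [x [x0 vx hN]] := qN_sub_gram j.
by rewrite /nuD hN (vM hk) ?vx ?addr0 ?mulf_neq0 ?(qN_neq0 hD).
Qed.

Lemma gram_sqclass (i0 : 'I_n) j :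
  (forall l : 'I_n, in_sqclass (N (a l)) (N (a i0))) ->
  in_sqclass (N (gram j)) (N (a i0)).
Proof.
move=> hsq; have [x [x0 _ ->]] := qN_sub_gram j.
have [e [e0 ->]] := hsq (insubd m (m + j)%N).
by exists (e * x); split; [rewrite mulf_neq0 | ring].
Qed.

Hypothesis ht1 : (1 <= t)%N.

Lemma svec_in_tail_span r : in_tail_span (svec m r lam).
Proof.
have m_lt_mt : (m < mt)%N by rewrite val_mt -{1}(addn0 m) ltn_add2l.
split=> i hi; rewrite /svec.
  by rewrite ifN ?ltnNge ?(ltnW hi) //; apply: contraTneq hi => ->; rewrite ltnn.
have m_lt_i : (m < i)%N by apply: leq_ltn_trans hi; rewrite leq_addr.
have [-> ->] : (i == m) = false /\ (mt == m) = false by rewrite -!val_eqE !gtn_eqF.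
rewrite m_lt_i m_lt_mt /tail_coef; have [/(qN_eq0 hD) lmt0|Nlmt0] := eqVneq (N (lam mt)) 0.
  case: (hmax val_mt hi) => [/(qN_eq0 hD) -> |[]]; last by rewrite lmt0 qN0 eqxx.
  by rewrite lmt0 qopp0 qmul0r.
by rewrite qmulNr qmulA qmulV // qmul1r.
Qed.

Lemma mu_gram_ge :
  mu [seq nu (a i) | i <- enum 'I_n] <= mu [seq nu (gram j) | j <- enum 'I_t.+1].
Proof.
have lt_n p : (p < t.+1)%N -> (m + p < n)%N.
  by move=> hp; apply: leq_ltn_trans ht2; rewrite leq_add2l -ltnS.
have -> : [seq nu (gram j) | j <- enum 'I_t.+1] = map (fun j => nu_a (m + j)) (iota 0 t.+1).
  by rewrite -val_enum_ord -map_comp; apply: eq_map => j /=; rewrite nu_gram.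
rewrite map_nu_a; apply: mu_map_iota_ge; first 2 last.
- move=> j hj /=; rewrite addnS; apply: (mu_map_iota_le nu_a_mono); by rewrite -addnS lt_n.
- move=> p q; rewrite !inE => hp hq hpq.
  by apply: nu_a_mono; rewrite ?inE ?lt_n ?leq_add2l.
- by rewrite ltnS.
Qed.

End SubLattice.

Theorem theorem2
  (k : fieldType) (v : k -> int) (hk : dyadic_local_field v)
  (alpha beta : k) (hD : is_quat_division alpha beta)
  (n : nat) (a : 'I_n -> quat k)
  (ha_pure : forall i, pure (a i)) (ha_nz : forall i, a i <> qzero)
  (ha_sorted : forall i j : 'I_n, (i <= j)%N ->
      nuD alpha beta v (a i) <= nuD alpha beta v (a j))
  (hmu : nuD alpha beta v (qofk 4%:R) <
         mu [seq nuD alpha beta v (a i) | i <- enum 'I_n])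
  (hsq : forall i0 j : 'I_n, val i0 = 0%N ->
      in_sqclass (qN alpha beta (a j)) (qN alpha beta (a i0)))
  (m : 'I_n) (r : quat k) (lam : 'I_n -> quat k)
  (hr : inO alpha beta v r)
  (hr2 : leabs alpha beta v (qofk 2%:R) (qsub qone r))
  (hlam : forall l : 'I_n, (m < l)%N -> inO alpha beta v (lam l))
  (hsig_nz : sigmaB alpha beta a m r <> qzero)
  (hsig : qsub (sigmaB alpha beta a m r) (qconj (sigmaB alpha beta a m r))
          = herm alpha beta a (svec m r lam) (svec m r lam))
  (hU : inU alpha beta a
          (simple_rot alpha beta a (svec m r lam) (sigmaB alpha beta a m r))
          (inStd alpha beta v (n:=n)))
  (t : nat) (ht1 : (1 <= t)%N) (ht2 : (m + t < n)%N)
  (hmax : forall i j : 'I_n, val i = (m + t)%N -> (m + t < j)%N ->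
      leabs alpha beta v (lam j) (lam i)) :
  exists (u : 'I_t.+1 -> vec k n) (b : 'I_t.+1 -> quat k),
    (forall j, b j <> qzero) /\
    (forall j, herm alpha beta a (u j) (u j) = b j) /\
    (forall i j, i != j -> herm alpha beta a (u i) (u j) = qzero) /\
    (forall x, inSpan alpha beta v u x -> inStd alpha beta v x) /\
    inU alpha beta a
      (simple_rot alpha beta a (svec m r lam) (sigmaB alpha beta a m r))
      (inSpan alpha beta v u) /\
    mu [seq nuD alpha beta v (a i) | i <- enum 'I_n]
      <= mu [seq nuD alpha beta v (b j) | j <- enum 'I_t.+1] /\
    (forall i0 : 'I_n, val i0 = 0%N -> forall j,
      in_sqclass (qN alpha beta (b j)) (qN alpha beta (a i0))).
Proof.
(* Of the conditions defining B(Lambda) only that (s; sigma) preserves Lambda is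
   used. *)
pose u := sub_basis alpha beta m lam (t := t).
exists u, (fun j => herm alpha beta a (u j) (u j)).
split; first by move=> j; exact: (gram_neq0 hk hD ht2 hmax ha_nz ha_sorted hmu).
split; first by [].
split; first exact: herm_sub_basis_orth.
split; first by move=> x /(inSpan_sub_basis hk ht2 hmax) [].
split.
  split; first exact: hU.1.
  exact: simple_rot_stabilizes_sub_lattice (svec_in_tail_span hD ht2 hmax ht1 r) hU.2.
split; first exact: (mu_gram_ge hk hD ht2 hmax ha_nz ha_sorted hmu ht1).
by move=> i0 hi0 j; apply: (gram_sqclass hk hD ht2 hmax ha_nz ha_sorted hmu) => l; apply: hsq.
Qed.
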